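(* Let $X=[x_{ij}]\in\mathbb{R}^{N_1\times N_2}$ be $k$-sparse. For $i\in\{1,2\}$ let $U_i\in\mathbb{R}^{m_i\times N_i}$ satisfy the NSP$_k$ property. Define $Y=U_1XU_2^T\in\mathbb{R}^{m_1\times m_2}$ and let $y_1,\dots,y_{m_2}\in\mathbb{R}^{m_1}$ be the columns of $Y$. For $i\in[m_2]$ consider $$\hat z_i=\arg\min_{z\in\mathbb{R}^{N_1}}\|z\|_1\quad\text{s.t.}\quad y_i=U_1z .$$ Then each of these problems has a unique solution $\hat z_i$, and $\hat z_i$ is $k$-sparse; moreover, the matrix $Z\in\mathbb{R}^{N_1\times m_2}$ with columns $\hat z_1,\dots,\hat z_{m_2}$ equals $XU_2^T$. Let $w_1^T,\dots,w_{N_1}^T$ be the rows of $Z$ (so $w_j\in\mathbb{R}^{m_2}$). Then for each $j\in[N_1]$ the problem $$\hat v_j=\arg\min_{v\in\mathbb{R}^{N_2}}\|v\|_1\quad\text{s.t.}\quad w_j=U_2v$$ has a unique solution, and $\hat v_j^T$ is the $j$-th row of $X$. In particular $X$ is uniquely recovered from $Y$.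
   Context: A vector or matrix is $k$-sparse if it has at most $k$ nonzero entries. For a positive integer $n$, $[n]=\{1,\dots,n\}$. For $w\in\mathbb{R}^N$ and $S\subset[N]$, $\|w_S\|_1=\sum_{i\in S}|w_i|$ and $S^c=[N]\setminus S$. A matrix $A\in\mathbb{R}^{m\times N}$ satisfies the null space property of order $k$ (NSP$_k$) if for every $w\neq 0$ with $Aw=0$ and every $S\subset[N]$ with $|S|=k$ one has $\|w_S\|_1<\|w_{S^c}\|_1$. *)

From HB Require Import structures.
From mathcomp Require Import all_boot all_order all_algebra.
Set Implicit Arguments. Unset Strict Implicit. Unset Printing Implicit Defensive.
Import Order.TTheory GRing.Theory Num.Theory.
Local Open Scope ring_scope.

Definition sparse (R : numDomainType) (m n : nat) (k : nat) (A : 'M[R]_(m, n)) : Prop :=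
  (#|[set ij : 'I_m * 'I_n | A ij.1 ij.2 != 0%R]| <= k)%N.

Definition l1norm (R : numDomainType) (n : nat) (v : 'cV[R]_n) : R :=
  \sum_(i < n) `|v i 0|.

Definition l1norm_on (R : numDomainType) (n : nat) (S : {set 'I_n}) (v : 'cV[R]_n) : R :=
  \sum_(i in S) `|v i 0|.

Definition NSP (R : numDomainType) (m N : nat) (k : nat) (A : 'M[R]_(m, N)) : Prop :=
  forall w : 'cV[R]_N, w != 0 -> A *m w = 0 ->
  forall S : {set 'I_N}, #|S| = k -> l1norm_on S w < l1norm_on (~: S) w.

Definition l1_argmin (R : numDomainType) (m N : nat) (A : 'M[R]_(m, N))
  (y : 'cV[R]_m) (z : 'cV[R]_N) : Prop :=
  y = A *m z /\ forall z' : 'cV[R]_N, y = A *m z' -> l1norm z <= l1norm z'.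

From HB Require Import structures.
From mathcomp Require Import all_boot all_order all_algebra.
Import Order.TTheory GRing.Theory Num.Theory.
Set Implicit Arguments.
Unset Strict Implicit.
Unset Printing Implicit Defensive.
Local Open Scope ring_scope.

(* If A has the null space property of order k and x is k-sparse, then for any
   z <> x with A z = A x, putting w = z - x and S = supp x,
   ||z||_1 - ||x||_1 >= ||w_{S^c}||_1 - ||w_S||_1 > 0, where the last step uses
   the NSP for #|S| <= k, obtained from #|S| = k by enlarging S.
   So x is the unique l1 minimiser, and two k-sparse vectors with the same
   image coincide.  Each column of U1 X U2^T is the image under U1 of the
   k-sparse column of X U2^T, and each row of X U2^T is the image under U2 of
   the k-sparse corresponding row of X; applying this twice recovers X. *)

Lemma exists_superset_card (T : finType) (A : {set T}) (k : nat) :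
  (#|A| <= k <= #|T|)%N -> exists2 B : {set T}, A \subset B & #|B| = k.
Proof.
elim: k => [|k IHk] /andP [leAk lekT].
  by exists A => //; apply/eqP; rewrite -leqn0.
have [eqAk | neqAk] := eqVneq #|A| k.+1; first by exists A.
have [|B sAB cardB] := IHk.
  by rewrite -ltnS ltn_neqAle neqAk leAk ltnW.
have [x] : exists x, x \in ~: B.
  by apply/set0Pn; rewrite -card_gt0 -(leq_add2l #|B|) cardsC addn1 cardB.
rewrite inE => xNB.
exists (x |: B); first exact: subset_trans sAB (subsetU1 x B).
by rewrite cardsU1 xNB cardB.
Qed.

Section L1Norm.
Variables (R : numDomainType) (n : nat).
Implicit Types (S : {set 'I_n}) (v : 'cV[R]_n).

Lemma l1norm_on_subset S S' v : S \subset S' -> l1norm_on S v <= l1norm_on S' v.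
Proof.
move=> sSS'; rewrite /l1norm_on (big_setID (A := S') S) /= setIC (setIidPl sSS') lerDl.
by apply: sumr_ge0 => i _.
Qed.

Lemma l1normE S v : l1norm v = l1norm_on S v + l1norm_on (~: S) v.
Proof.
rewrite /l1norm /l1norm_on (bigID (mem S)) /=; congr (_ + _).
by apply: eq_bigl => i; rewrite inE.
Qed.

End L1Norm.

Section NullSpaceProperty.
Variables (R : numDomainType) (m N k : nat) (A : 'M[R]_(m, N)).
Hypotheses (leqkN : (k <= N)%N) (nspA : NSP k A).

Lemma NSP_card_le (w : 'cV[R]_N) (S : {set 'I_N}) :
  w != 0 -> A *m w = 0 -> (#|S| <= k)%N ->
  l1norm_on S w < l1norm_on (~: S) w.
Proof.
move=> w_neq0 Aw0 leSk.
have [|S' sSS' cardS'] := @exists_superset_card _ S k; first by rewrite leSk card_ord.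
apply: le_lt_trans (l1norm_on_subset w sSS') _.
apply: lt_le_trans (nspA w_neq0 Aw0 cardS') _.
by apply: l1norm_on_subset; rewrite setCS.
Qed.

Lemma NSP_sparse_l1norm_lt (x z : 'cV[R]_N) :
  sparse k x -> A *m z = A *m x -> z != x -> l1norm x < l1norm z.
Proof.
move=> sparse_x Azx z_neq_x.
pose S := [set i | x i 0 != 0].
have leSk : (#|S| <= k)%N.
  have inj_pair : injective (fun i : 'I_N => (i, ord0 : 'I_1)) by move=> i j [].
  apply: leq_trans sparse_x; rewrite -(card_imset S inj_pair).
  apply: subset_leq_card; by apply/subsetP => _ /imsetP [i + ->]; rewrite !inE.
pose w := z - x.
have w_neq0 : w != 0 by rewrite subr_eq0.
have Aw0 : A *m w = 0 by rewrite mulmxBr Azx subrr.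
have x_le_zw : l1norm_on S x <= l1norm_on S z + l1norm_on S w.
  rewrite -big_split ler_sum // => i _.
  by rewrite /w !mxE -{1}[x i 0](subKr (z i 0)); apply: ler_normB.
have zCS : l1norm_on (~: S) z = l1norm_on (~: S) w.
  by apply: eq_bigr => i; rewrite !inE negbK !mxE => /eqP ->; rewrite subr0.
have xCS : l1norm_on (~: S) x = 0.
  by apply: big1 => i; rewrite !inE negbK => /eqP ->; rewrite normr0.
rewrite (l1normE S x) (l1normE S z) zCS xCS addr0.
by apply: le_lt_trans x_le_zw _; rewrite ltrD2l NSP_card_le.
Qed.

Lemma l1_argmin_sparseP (x z : 'cV[R]_N) :
  sparse k x -> l1_argmin A (A *m x) z <-> z = x.
Proof.
move=> sparse_x; split => [[Azx minz] | ->].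
  apply/eqP; apply: contraT => z_neq_x.
  by rewrite -(ltxx (l1norm z)) (le_lt_trans (minz x erefl))
     // NSP_sparse_l1norm_lt.
split=> // z' Az'x; have [-> // | z'_neq_x] := eqVneq z' x.
exact/ltW/(NSP_sparse_l1norm_lt sparse_x (esym Az'x)).
Qed.

Lemma l1_argmin_sparse_unique (x : 'cV[R]_N) :
  sparse k x -> exists! z, l1_argmin A (A *m x) z.
Proof.
move=> sparse_x; exists x; split; first exact/l1_argmin_sparseP.
by move=> z /(l1_argmin_sparseP _ sparse_x) ->.
Qed.

Lemma NSP_sparse_inj (x z : 'cV[R]_N) :
  sparse k x -> sparse k z -> A *m z = A *m x -> z = x.
Proof.
move=> sparse_x sparse_z Azx; apply/eqP; apply: contraT => z_neq_x.
have lt_xz := NSP_sparse_l1norm_lt sparse_x Azx z_neq_x.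
have lt_zx : l1norm z < l1norm x.
  by apply: NSP_sparse_l1norm_lt sparse_z (esym Azx) _; rewrite eq_sym.
by rewrite -(ltxx (l1norm x)) (lt_trans lt_xz lt_zx).
Qed.

End NullSpaceProperty.

Section SparseMatrix.
Variables (R : numDomainType) (k : nat).

Lemma sparse_nz_image (m n p q : nat) (M : 'M[R]_(m, n)) (M' : 'M[R]_(p, q))
    (f : 'I_m * 'I_n -> 'I_p * 'I_q) :
  sparse k M ->
  (forall ab, M' ab.1 ab.2 != 0 -> exists2 ij, M ij.1 ij.2 != 0 & ab = f ij) ->
  sparse k M'.
Proof.
move=> sparse_M nzM'; apply: leq_trans sparse_M.
apply: leq_trans (leq_imset_card f _); apply: subset_leq_card.
apply/subsetP => ab; rewrite inE => /nzM' [ij nzij ->].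
by apply: imset_f; rewrite inE.
Qed.

Lemma sparse_col_mulmx (m n p : nat) (M : 'M[R]_(m, n)) (B : 'M[R]_(n, p)) i :
  sparse k M -> sparse k (col i (M *m B)).
Proof.
move=> sparse_M; apply: (sparse_nz_image (f := fun ij => (ij.1, ord0)) sparse_M).
case=> a b /=; rewrite !mxE (ord1 b) => nz_sum.
have [l _ nzMal] : exists2 l, l \in 'I_n & M a l != 0.
  apply/exists_inP; apply: contraNT nz_sum => /exists_inPn allM0.
  by apply/eqP/big1 => l _; rewrite (eqP (negbNE (allM0 l isT))) mul0r.
by exists (a, l).
Qed.

Lemma sparse_tr_row (m n : nat) (M : 'M[R]_(m, n)) j :
  sparse k M -> sparse k (row j M)^T.
Proof.
move=> sparse_M; apply: (sparse_nz_image (f := fun ij => (ij.2, ord0)) sparse_M).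
by case=> a b /=; rewrite !mxE (ord1 b) => nzMja; exists (j, a).
Qed.

End SparseMatrix.

Theorem mainTheorem1 (R : realFieldType) (k N1 N2 m1 m2 : nat)
  (X : 'M[R]_(N1, N2)) (U1 : 'M[R]_(m1, N1)) (U2 : 'M[R]_(m2, N2))
  (hk1 : (k <= N1)%N) (hk2 : (k <= N2)%N)
  (hX : sparse k X) (hU1 : NSP k U1) (hU2 : NSP k U2) :
  let Y := U1 *m X *m U2^T in
  [/\ (forall i : 'I_m2, exists! z : 'cV[R]_N1, l1_argmin U1 (col i Y) z),
      (forall (i : 'I_m2) (z : 'cV[R]_N1), l1_argmin U1 (col i Y) z ->
          sparse k z /\ z = col i (X *m U2^T)),
      (forall j : 'I_N1, exists! v : 'cV[R]_N2,
          l1_argmin U2 (row j (X *m U2^T))^T v),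
      (forall (j : 'I_N1) (v : 'cV[R]_N2),
          l1_argmin U2 (row j (X *m U2^T))^T v -> v^T = row j X)
    & (forall X' : 'M[R]_(N1, N2), sparse k X' -> U1 *m X' *m U2^T = Y -> X' = X)].
Proof.
move=> Y.
have colY i : col i Y = U1 *m col i (X *m U2^T) by rewrite !colE !mulmxA.
have rowZ (M : 'M_(N1, N2)) j : (row j (M *m U2^T))^T = U2 *m (row j M)^T.
  by rewrite row_mul trmx_mul trmxK.
have sparse_colZ i := sparse_col_mulmx U2^T i hX.
have sparse_rowX j := sparse_tr_row j hX.
split=> [i | i z | j | j v | X' sparse_X' eqY].
- by rewrite colY; exact: (l1_argmin_sparse_unique hk1 hU1 (sparse_colZ i)).
- by rewrite colY => /(l1_argmin_sparseP hk1 hU1 _ (sparse_colZ i)) ->; split.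
- by rewrite rowZ; exact: (l1_argmin_sparse_unique hk2 hU2 (sparse_rowX j)).
- by rewrite rowZ => /(l1_argmin_sparseP hk2 hU2 _ (sparse_rowX j)) ->; rewrite trmxK.
have eqZ : X' *m U2^T = X *m U2^T.
  apply/matrixP => a i.
  have eq_col : col i (X' *m U2^T) = col i (X *m U2^T).
    apply: (NSP_sparse_inj hk1 hU1 (sparse_colZ i) (sparse_col_mulmx U2^T i sparse_X')).
    by rewrite -colY !colE !mulmxA eqY.
  by move/colP/(_ a): eq_col; rewrite !mxE.
apply/row_matrixP => j; apply: trmx_inj.
apply: (NSP_sparse_inj hk2 hU2 (sparse_rowX j) (sparse_tr_row j sparse_X')).
by rewrite -!rowZ eqZ.
Qed.
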